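(* Let $(V,\{A,B\})$ be a forking problem in which every agent's preference is non-interleaving. Then the profile admits exactly one stable assignment.
   Context: Agents $V=\{v_1,\dots,v_n\}$; two alternatives $A,B$. Each agent $v_i$ has a strict total order $\succ_i$ on $\{A,B\}\times\{1,\dots,n\}$, where $(S,j)$ means being in the community adopting $S$ of size $j$; it is monotonic if $(S,j)\succ_i(S,k)$ whenever $k<j$. A preference is non-interleaving if it is monotonic and either $(A,1)\succ_i(B,n)$ or $(B,1)\succ_i(A,n)$. An assignment is a map $f:V\to\{A,B\}$; $v_i$ prefers $f$ to $g$ if $(f(v_i),|f^{-1}(f(v_i))|)\succ_i(g(v_i),|g^{-1}(g(v_i))|)$. An assignment $f$ is stable if there is no assignment $f'\neq f$ such that every agent $v_i$ with $f'(v_i)\neq f(v_i)$ prefers $f'$ to $f$. *)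

From HB Require Import structures.
From mathcomp Require Import all_boot.
Set Implicit Arguments. Unset Strict Implicit. Unset Printing Implicit Defensive.

Inductive alt := A | B.
Definition alt2bool (s : alt) : bool := if s is A then true else false.
Definition bool2alt (b : bool) : alt := if b then A else B.
Lemma alt2boolK : cancel alt2bool bool2alt. Proof. by case. Qed.
HB.instance Definition _ := Equality.copy alt (can_type alt2boolK).

(* A position (S, j): being in the community adopting S, of size j.
   Sizes are natural numbers; only sizes 1..n are meaningful. *)
Definition position := (alt * nat)%type.

Definition in_range (n : nat) (x : position) : Prop := 1 <= x.2 <= n.

Definition strict_total_order (n : nat) (r : position -> position -> bool) : Prop :=
  [/\ (forall x, in_range n x -> ~~ r x x),
      (forall x y z, in_range n x -> in_range n y -> in_range n z ->
         r x y -> r y z -> r x z)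
    & (forall x y, in_range n x -> in_range n y -> x <> y -> r x y \/ r y x)].

Definition monotonic (n : nat) (r : position -> position -> bool) : Prop :=
  forall (S : alt) (j k : nat), 1 <= k -> k < j -> j <= n -> r (S, j) (S, k).

Definition non_interleaving (n : nat) (r : position -> position -> bool) : Prop :=
  monotonic n r /\ (r (A, 1) (B, n) \/ r (B, 1) (A, n)).

Definition assignment (n : nat) := {ffun 'I_n -> alt}.

Definition comm_size (n : nat) (f : assignment n) (v : 'I_n) : nat :=
  #|[set u | f u == f v]|.

Definition prefers (n : nat) (pref : 'I_n -> position -> position -> bool)
  (v : 'I_n) (f g : assignment n) : bool :=
  pref v (f v, comm_size f v) (g v, comm_size g v).

Definition stable (n : nat) (pref : 'I_n -> position -> position -> bool)
  (f : assignment n) : Prop :=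
  ~ exists f' : assignment n,
      f' <> f /\ forall v, f' v <> f v -> prefers pref v f' f.

From mathcomp Require Import all_boot.

Set Implicit Arguments.
Unset Strict Implicit.
Unset Printing Implicit Defensive.

(* Non-interleaving makes one alternative dominant for each agent: every
   position in its community beats every position in the other one.  Hence an
   agent on its dominant alternative never wants to leave, and an agent off it
   always wants to switch.  So the assignment sending everybody to their
   dominant alternative is stable, and from any other assignment it is a
   deviation profitable to all movers. *)

Lemma comm_size_in_range n (f : assignment n) (v : 'I_n) (S : alt) :
  in_range n (S, comm_size f v).
Proof.
apply/andP; split.
  by rewrite card_gt0; apply/set0Pn; exists v; rewrite inE.
by rewrite -[n in _ <= n]card_ord max_card.
Qed.

Lemma strict_total_order_asym n r x y : strict_total_order n r ->
  in_range n x -> in_range n y -> r x y -> ~~ r y x.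
Proof.
case=> irr trans _ xn yn rxy; apply/negP => ryx.
exact: (negP (irr x xn)) (trans x y x xn yn xn rxy ryx).
Qed.

Section Dominant.
Variables (n : nat) (r : position -> position -> bool).
Hypotheses (r_order : strict_total_order n r) (r_nonint : non_interleaving n r).

Definition dominant : alt := if r (A, 1) (B, n) then A else B.

Lemma dominant_corner S : S <> dominant -> r (dominant, 1) (S, n).
Proof.
rewrite /dominant; case: r_nonint => _.
by case: ifP => rAB [] // rBA; case: S.
Qed.

Lemma dominates_of_corner T S j k : r (T, 1) (S, n) ->
  in_range n (T, j) -> in_range n (S, k) -> r (T, j) (S, k).
Proof.
case: r_order r_nonint => _ trans _ [mono _] corner.
move=> /andP[/= j1 jn] /andP[/= k1 kn].
have n1 : 0 < n := leq_trans j1 jn.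
have rng m (U : alt) : 0 < m -> m <= n -> in_range n (U, m).
  by move=> m1 mn; apply/andP.
have T_to_corner : r (T, j) (S, n).
  have [j_gt1 | j_le1] := ltnP 1 j; last by have -> : j = 1 by apply/anti_leq/andP.
  exact: trans _ _ _ (rng _ _ j1 jn) (rng 1 _ isT n1) (rng _ _ n1 (leqnn n))
    (mono _ _ _ (leqnn 1) j_gt1 jn) corner.
have [k_ltn | n_lek] := ltnP k n; last by have -> : k = n by apply/anti_leq/andP.
exact: trans _ _ _ (rng _ _ j1 jn) (rng _ _ n1 (leqnn n)) (rng _ _ k1 kn)
  T_to_corner (mono _ _ _ k1 k_ltn (leqnn n)).
Qed.

Lemma dominant_dominates S j k : S <> dominant ->
  in_range n (dominant, j) -> in_range n (S, k) -> r (dominant, j) (S, k).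
Proof. by move/dominant_corner; apply: dominates_of_corner. Qed.

End Dominant.

Section DominantAssignment.
Variables (n : nat) (pref : 'I_n -> position -> position -> bool).
Variable top : 'I_n -> alt.
Hypothesis pref_order : forall v, strict_total_order n (pref v).
Hypothesis top_dominates : forall v S j k, S <> top v ->
  in_range n (top v, j) -> in_range n (S, k) -> pref v (top v, j) (S, k).

Definition top_assignment : assignment n := [ffun v => top v].

Lemma prefers_top v (f g : assignment n) :
  f v = top v -> g v <> f v -> prefers pref v f g.
Proof.
move=> fv gv; rewrite /prefers fv.
by apply: top_dominates; [rewrite -fv | exact: comm_size_in_range ..].
Qed.

Lemma not_prefers_leaving_top v (f g : assignment n) :
  f v = top v -> g v <> f v -> ~~ prefers pref v g f.
Proof.
move=> fv gv; apply: strict_total_order_asym (prefers_top fv gv) => //;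
  exact: comm_size_in_range.
Qed.

Lemma top_assignment_stable : stable pref top_assignment.
Proof.
case=> f [f_neq f_better]; apply: f_neq; apply/ffunP => v.
have [// | /eqP f_moved] := eqVneq (f v) (top_assignment v).
have /negP[] := not_prefers_leaving_top (ffunE _ v) f_moved.
exact: f_better.
Qed.

Lemma stable_top_assignment f : stable pref f -> f = top_assignment.
Proof.
have [// | /eqP f_neq] := eqVneq f top_assignment; case.
exists top_assignment; split=> [|v moved]; first exact: nesym.
by apply: prefers_top; [rewrite ffunE | exact: nesym].
Qed.

End DominantAssignment.

Theorem mainTheorem2 (n : nat) (pref : 'I_n -> position -> position -> bool) :
  (forall v, strict_total_order n (pref v)) ->
  (forall v, non_interleaving n (pref v)) ->
  exists! f : assignment n, stable pref f.
Proof.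
move=> pref_order pref_nonint.
have top_dominates v := dominant_dominates (pref_order v) (pref_nonint v).
exists (top_assignment (fun v => dominant n (pref v))); split.
  exact: top_assignment_stable pref_order top_dominates.
by move=> f /(stable_top_assignment top_dominates) ->.
Qed.
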